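(* Let $c_1,c_2,c_3\in\mathbb{C}$ be three non-aligned points with $c_1+c_2+c_3=0$. For every $\eta>0$ there exist $\epsilon_0\in(0,\eta)$ and $\alpha_0\in(0,\eta)$ such that for every $\rho\in\mathbb{C}$ with $1-\alpha_0\le|\rho|\le1+\alpha_0$, setting $\phi_j(z):=\rho z+\epsilon_0c_j$ for $j\in\{1,2,3\}$, we have $$\overline{\mathbb{D}}\subset\bigcup_{j=1}^3\phi_j(\mathbb{D}),$$ and there are three open sets $H_1,H_2,H_3$ such that $\mathbb{D}=\bigcup_{j=1}^3H_j$, $\overline{\phi_j(H_j)}\subset\mathbb{D}$ and $\overline{\phi_j(\tfrac13H_j)}\subset\tfrac13\mathbb{D}$ for each $j$.
   Context: $\mathbb{D}$ is the unit disc of $\mathbb{C}$; for $E\subset\mathbb{C}$ and $t\in\mathbb{C}^*$, $tE$ is the image of $E$ under $z\mapsto tz$. The sets $H_j$ may depend on $\rho$. *)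

From HB Require Import structures.
From mathcomp Require Import all_boot all_order all_algebra.
From mathcomp Require Import all_classical all_reals all_analysis.
From mathcomp Require Export complex.
Export Order.TTheory GRing.Theory Num.Theory.
Export numFieldNormedType.Exports.

Set Implicit Arguments.
Unset Strict Implicit.
Unset Printing Implicit Defensive.

Local Open Scope classical_set_scope.
Local Open Scope ring_scope.
Local Open Scope complex_scope.

(* The complex plane over R, seen as a numClosedFieldType so that it
   receives its (norm) topology from MathComp-Analysis. *)
Definition CC (R : rcfType) : numClosedFieldType := R[i].

Definition udisc (R : rcfType) : set (CC R) := [set z | `|z| < 1].
Arguments udisc R : clear implicits.

Definition cdilate (R : rcfType) (t : CC R) (E : set (CC R)) : set (CC R) :=
  (fun z => t * z) @` E.

Definition aligned (R : rcfType) (c1 c2 c3 : CC R) : Prop :=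
  exists a b : CC R, a != 0 /\
    forall z, z \in [:: c1; c2; c3] -> exists t : R, z = b + t%:C * a.

(* Since c_1, c_2, c_3 sum to 0 and span the plane, every direction makes an
   obtuse angle with one of them, uniformly: there is d > 0 such that for every
   v some j has <v, c_j> <= -d |v|.  If moreover |v| <= 1 + alpha and
   eps <= t <= 3 eps, then |v + t c_j| < r = 1 - eps d / 2, provided eps and
   alpha are small compared with d.  Applied to v = -z, this puts
   (z - eps c_j) / rho in D whenever |z| <= 1.  Applied to v = rho z, it shows
   that D is covered by the open sets
   H_j = {z in D : |rho z + eps c_j| < r and |rho z + 3 eps c_j| < r},
   where the second condition controls phi_j (z / 3) = (rho z + 3 eps c_j) / 3. *)

From HB Require Import structures.
From mathcomp Require Import all_boot all_order all_algebra.
From mathcomp Require Import all_classical all_reals all_analysis.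
From mathcomp Require Import complex.
From mathcomp Require Import ring lra.
Import Order.TTheory GRing.Theory Num.Theory.
Import numFieldNormedType.Exports.
Import Normc.
Local Open Scope classical_set_scope.
Local Open Scope ring_scope.
Local Open Scope complex_scope.

Lemma sum0_exists_abs_le (F : realDomainType) (n : nat) (a : 'I_n.+2 -> F) :
  \sum_i a i = 0 -> exists j, forall i, `|a i| <= - n.+1%:R * a j.
Proof.
move=> sum0; have [j _ jmin] := @arg_minP _ _ _ ord0 xpredT a isT.
have le_aj i : a i <= - n.+1%:R * a j.
  have : n.+1%:R * a j <= \sum_(k | k != i) a k.
    apply: le_trans (ler_sum _ (fun k _ => jmin k isT)).
    by rewrite (@sumr_const _ _ (predC1 i)) cardC1 card_ord mulr_natl.
  have := sum0; rewrite (bigD1 i) //=.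
  rewrite mulNr; lra.
exists j => i; rewrite ler_norml le_aj andbT mulNr opprK.
have := le_aj j; have := jmin i isT; have := ler0n F n; rewrite -natr1; nra.
Qed.

Section PlaneGeometry.
Context {R : rcfType}.
Implicit Types (z w u v : CC R) (t : R).
Local Notation Re := (@complex.Re R).
Local Notation Im := (@complex.Im R).

Definition dotc z w : R := Re z * Re w + Im z * Im w.
Definition crossc z w : R := Re z * Im w - Im z * Re w.

Lemma normc_ge0 z : 0 <= normc z.
Proof. by case: z => a b; exact: sqrtr_ge0. Qed.

Lemma sqr_normc z : normc z ^+ 2 = Re z ^+ 2 + Im z ^+ 2.
Proof. by case: z => a b; rewrite /= sqr_sqrtr // addr_ge0 ?sqr_ge0. Qed.

Lemma normr_normc z : `|z| = (normc z)%:C.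
Proof. by case: z => a b; rewrite normc_def. Qed.

Lemma dotcNl z w : dotc (- z) w = - dotc z w.
Proof. by case: z => a b; rewrite /dotc /=; ring. Qed.

Lemma dotcNr z w : dotc z (- w) = - dotc z w.
Proof. by case: w => a b; rewrite /dotc /=; ring. Qed.

Lemma dotc_sumr (I : Type) (r : seq I) (P : pred I) (c : I -> CC R) z :
  dotc z (\sum_(j <- r | P j) c j) = \sum_(j <- r | P j) dotc z (c j).
Proof.
apply: (big_morph (dotc z)) => [w1 w2|]; last by rewrite /dotc /= !mulr0 addr0.
by rewrite /dotc /=; ring.
Qed.

Lemma sqr_normc_addZ z w t :
  normc (z + t%:C * w) ^+ 2 = normc z ^+ 2 + 2 * t * dotc z w + t ^+ 2 * normc w ^+ 2.
Proof. by rewrite !sqr_normc /dotc; case: z => a b; case: w => p q /=; ring. Qed.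

Lemma lagrange_crossc u w v :
  crossc u w ^+ 2 * normc v ^+ 2 <=
    (normc u ^+ 2 + normc w ^+ 2) * (dotc v u ^+ 2 + dotc v w ^+ 2).
Proof.
rewrite !sqr_normc /crossc /dotc -subr_ge0.
case: u => p0 q0; case: w => p1 q1; case: v => x y /=.
set P := p0 ^+ 2 + p1 ^+ 2; set Q := p0 * q0 + p1 * q1; set S := q0 ^+ 2 + q1 ^+ 2.
rewrite (_ : _ - _ = (P * x + Q * y) ^+ 2 + (Q * x + S * y) ^+ 2) ?addr_ge0 ?sqr_ge0 //.
by rewrite /P /Q /S; ring.
Qed.

Lemma crossc_eq0_colinear u w : u != 0 -> crossc u w = 0 ->
  w = (dotc w u / normc u ^+ 2)%:C * u.
Proof.
rewrite sqr_normc /crossc /dotc; case: u => p q; case: w => x y /= u_neq0 cross0.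
have n_neq0 : p ^+ 2 + q ^+ 2 != 0.
  by apply: contra u_neq0; rewrite paddr_eq0 ?sqr_ge0 // !sqrf_eq0 => /andP[/eqP-> /eqP->].
apply/eqP; rewrite eq_complex /= !mul0r subr0 addr0; apply/andP; split; apply/eqP;
  apply: (mulIf n_neq0); rewrite mulrAC divfK //.
- by rewrite -[LHS]addr0 -[X in _ + X](mulr0 q) -cross0; ring.
- by rewrite -[LHS]subr0 -[X in _ - X](mulr0 p) -cross0; ring.
Qed.

Lemma aligned_of_multiples (a c0 c1 c2 : CC R) : a != 0 ->
  (forall z, z \in [:: c0; c1; c2] -> exists t, z = t%:C * a) -> aligned c0 c1 c2.
Proof.
move=> a_neq0 mult; exists a, 0; split => // z /mult [t ->].
by exists t; rewrite add0r.
Qed.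

Lemma crossc_neq0_of_not_aligned {c0 c1 c2 : CC R} :
  ~ aligned c0 c1 c2 -> c0 + c1 + c2 = 0 -> crossc c0 c1 != 0.
Proof.
move=> not_aligned sum0; apply/eqP => cross0; apply: not_aligned.
have c2E : c2 = - (c0 + c1) by apply/eqP; rewrite -addr_eq0 addrC sum0.
have [c0_0 | c0_neq0] := eqVneq c0 0.
  have [c1_0 | c1_neq0] := eqVneq c1 0.
    apply: (@aligned_of_multiples 1) => [|z]; first exact: oner_neq0.
    rewrite c2E c0_0 c1_0 addr0 oppr0 !inE !orbb => /eqP ->.
    by exists 0; rewrite mul0r.
  apply: (@aligned_of_multiples c1) => // z; rewrite !inE => /or3P[] /eqP ->.
  - by exists 0; rewrite c0_0 mul0r.
  - by exists 1; rewrite rmorph1 mul1r.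
  - by exists (-1); rewrite c2E c0_0 add0r rmorphN1 mulN1r.
have c1E := crossc_eq0_colinear _ _ c0_neq0 cross0.
apply: (@aligned_of_multiples c0) => // z; rewrite !inE => /or3P[] /eqP ->.
- by exists 1; rewrite rmorph1 mul1r.
- by eexists; exact: c1E.
- by exists (-1 - dotc c1 c0 / normc c0 ^+ 2); rewrite c2E {1}c1E; ring.
Qed.

Lemma normc_shift_lt z w t (e d alpha : R) :
  0 < e -> 0 < d -> 0 <= alpha -> 8 * alpha <= e * d -> e <= t ->
  2 * t * d <= 1 -> 2 * t * normc w ^+ 2 <= d ->
  normc z <= 1 + alpha -> dotc z w <= - (d * normc z) ->
  normc (z + t%:C * w) < 1 - e * d / 2.
Proof.
move=> e_gt0 d_gt0 alpha_ge0 alpha_le e_le_t td_le tw_le z_le dot_le.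
have t_gt0 : 0 < t := lt_le_trans e_gt0 e_le_t.
have ed_le : e * d <= t * d by rewrite ler_wpM2r // ltW.
have N_ge0 := normc_ge0 z.
rewrite -ltr_sqr ?nnegrE ?normc_ge0 //; last by nra.
rewrite sqr_normc_addZ.
have endpoint : normc z ^+ 2 - 2 * t * d * normc z <=
    (1 + alpha) ^+ 2 - 2 * t * d * (1 + alpha) by nra.
have : 2 * t * dotc z w <= - (2 * t * d * normc z) by nra.
have : t ^+ 2 * normc w ^+ 2 <= t * d / 2 by nra.
nra.
Qed.
End PlaneGeometry.

Lemma spread_directions {R : rcfType} {n : nat} {c : 'I_n.+2 -> CC R}
    {i k : 'I_n.+2} :
  crossc (c i) (c k) != 0 -> \sum_j c j = 0 ->
  exists2 d : R, 0 < d & forall v, exists j, dotc v (c j) <= - (d * normc v).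
Proof.
move=> cross_neq0 sum0.
set K := normc (c i) ^+ 2 + normc (c k) ^+ 2.
have cross2_gt0 : 0 < crossc (c i) (c k) ^+ 2 by rewrite exprn_even_gt0 ?cross_neq0 ?orbT.
have K_gt0 : 0 < K.
  have := lagrange_crossc (c i) (c k) 1; rewrite normc1 expr1n mulr1 -/K.
  have : 0 <= K by rewrite addr_ge0 ?sqr_ge0.
  have : 0 <= dotc 1 (c i) ^+ 2 + dotc 1 (c k) ^+ 2 by rewrite addr_ge0 ?sqr_ge0.
  nra.
pose d0 := Num.sqrt (crossc (c i) (c k) ^+ 2 / (2 * K)).
have d0_sqr : d0 ^+ 2 = crossc (c i) (c k) ^+ 2 / (2 * K).
  by rewrite sqr_sqrtr // ltW // divr_gt0 // mulr_gt0.
have m_gt0 : 0 < n.+1%:R :> R by rewrite ltr0Sn.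
exists (d0 / n.+1%:R).
  by rewrite divr_gt0 // sqrtr_gt0 divr_gt0 // mulr_gt0.
move=> v; have [j jmin] : exists j, forall l,
    `|dotc v (c l)| <= - n.+1%:R * dotc v (c j).
  by apply: sum0_exists_abs_le; rewrite -dotc_sumr sum0 /dotc /= !mulr0 addr0.
exists j.
suff : d0 * normc v <= - n.+1%:R * dotc v (c j).
  by rewrite lerNr mulrAC ler_pdivrMr // [X in _ <= X]mulrC mulrN -mulNr.
set m := - _ * _ in jmin *.
have m_ge0 : 0 <= m := le_trans (normr_ge0 _) (jmin i).
have sqr_le : dotc v (c i) ^+ 2 + dotc v (c k) ^+ 2 <= 2 * m ^+ 2.
  by move: (jmin i) (jmin k) => /ler_normlP[? ?] /ler_normlP[? ?]; nra.
have lagrange := lagrange_crossc (c i) (c k) v; rewrite -/K in lagrange.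
rewrite -ler_sqr ?nnegrE //; last exact: mulr_ge0 (sqrtr_ge0 _) (normc_ge0 _).
rewrite exprMn d0_sqr mulrAC ler_pdivrMr ?mulr_gt0 //.
by have := ler_wpM2l (ltW K_gt0) sqr_le; lra.
Qed.

Lemma closed_ball_subset_ball (K : numFieldType) (V : pseudoMetricType K)
    (x : V) (r1 r2 : K) :
  r1 < r2 -> closed_ball x r1 `<=` ball x r2.
Proof.
move=> r12 y /(_ (ball y (r2 - r1)) (nbhsx_ballx _ _ _)).
rewrite subr_gt0 => /(_ r12) [w [xw /ball_sym yw]].
by have := ball_triangle xw yw; rewrite addrC subrK.
Qed.

Lemma open_affine_preimage (K : numFieldType) (a b : K) (A : set K) :
  open A -> open ((fun z => a * z + b) @^-1` A).
Proof.
move=> oA; apply: open_comp => // x _.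
exact: continuousD (continuousM (@cst_continuous _ _ a x) (fun _ => id))
  (@cst_continuous _ _ b x).
Qed.

Section Disc.
Variable R : rcfType.

Lemma ball0_normcE (z : CC R) (r : R) : ball (0 : CC R) r%:C z = (normc z < r).
Proof. by rewrite /ball /= sub0r normrN normr_normc ltcR. Qed.

Lemma udiscE : udisc R = ball 0 1.
Proof. by apply/seteqP; split => z; rewrite /udisc /ball /= sub0r normrN. Qed.

Lemma udisc_normcE (z : CC R) : udisc R z = (normc z < 1).
Proof. by rewrite udiscE -[X in ball _ X]/((1 : R)%:C) ball0_normcE. Qed.

Lemma closure_udisc_normc_le1 (z : CC R) : closure (udisc R) z -> normc z <= 1.
Proof.
move=> z_cl; apply/ler_addgt0Pr => e e_gt0; apply: ltW; rewrite -ball0_normcE.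
apply: (@closed_ball_subset_ball _ _ _ 1); last by rewrite /closed_ball -udiscE.
by rewrite -[X in X < _]/((1 : R)%:C) ltcR ltrDl.
Qed.

Lemma cdilate_udisc (t : CC R) : t != 0 -> cdilate t (udisc R) = ball 0 `|t|.
Proof.
move=> t_neq0; apply/seteqP; split => w; rewrite /ball /= sub0r normrN.
  case=> z z_lt1 <-; rewrite normrM -[X in _ < X]mulr1 ltr_pM2l //.
  by rewrite normr_gt0.
move=> w_lt; exists (w / t); last by rewrite mulrC divfK.
by rewrite /udisc /= normrM normfV ltr_pdivrMr ?normr_gt0 // mul1r.
Qed.
End Disc.

Section Construction.
Context {R : rcfType} {I : Type}.
Variables (c : I -> CC R) (d eps alpha : R).
Variable rho : CC R.
Hypotheses (d_gt0 : 0 < d) (eps_gt0 : 0 < eps) (alpha_ge0 : 0 <= alpha).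
Hypotheses (alpha_le : 8 * alpha <= eps * d) (eps_d_le : 6 * eps * d <= 1).
Hypothesis eps_c_le : forall j, 6 * eps * normc (c j) ^+ 2 <= d.
Hypothesis spread : forall v, exists j, dotc v (c j) <= - (d * normc v).
Hypothesis rho_near1 : 1 - alpha <= normc rho <= 1 + alpha.

Local Notation r := (1 - eps * d / 2).
Local Notation phi t j := (fun z => rho * z + t%:C * c j).

Definition cover_piece j :=
  udisc R `&` phi eps j @^-1` ball 0 r%:C `&` phi (3 * eps) j @^-1` ball 0 r%:C.

(* [lra] and [nra] do not see section hypotheses, hence the [move:]s. *)
Lemma cover_radius_le : r <= 1 - alpha.
Proof. by move: alpha_ge0 alpha_le => *; lra. Qed.

Lemma cover_radius_lt1 : r < 1.
Proof. by have := mulr_gt0 eps_gt0 d_gt0; lra. Qed.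

Lemma cover_radius_gt0 : 0 < r.
Proof. by move: eps_d_le => *; lra. Qed.

Lemma normc_shift_lt_radius w z t : eps <= t <= 3 * eps ->
  6 * eps * normc w ^+ 2 <= d -> normc z <= 1 + alpha ->
  dotc z w <= - (d * normc z) -> normc (z + t%:C * w) < r.
Proof.
move=> /andP[t_ge t_le] w_le z_le dot_le.
move: eps_gt0 eps_d_le (sqr_ge0 (normc w)) => *.
by apply: (@normc_shift_lt _ _ _ _ eps d alpha) => //; nra.
Qed.

Lemma closed_udisc_covered : closure (udisc R) `<=` \bigcup_j (phi eps j @` udisc R).
Proof.
move=> z /closure_udisc_normc_le1 z_le1.
have r_le_rho : r <= normc rho by case/andP: rho_near1 => + _; exact: le_trans cover_radius_le.
have rho_gt0 : 0 < normc rho := lt_le_trans cover_radius_gt0 r_le_rho.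
have rho_neq0 : rho != 0 by apply: contraTneq rho_gt0 => ->; rewrite normc0 ltxx.
have [j] := spread (- z); rewrite dotcNl normcN lerN2 -lerN2 -dotcNr => dot_le.
exists j => //; exists ((z - eps%:C * c j) / rho); last by rewrite mulrC divfK ?subrK.
rewrite udisc_normcE normcM normcV ltr_pdivrMr // mul1r -mulrN.
apply: lt_le_trans r_le_rho; apply: normc_shift_lt_radius; rewrite ?normcN //.
  by rewrite lexx ler_peMl ?ltW // ltr1n.
by apply: le_trans z_le1 _; rewrite lerDl.
Qed.

Lemma open_cover_piece j : open (cover_piece j).
Proof.
rewrite /cover_piece udiscE.
by do !apply: openI; apply: ball_open || apply: open_affine_preimage; apply: ball_open.
Qed.

Lemma udisc_bigcup_cover_piece : udisc R = \bigcup_j cover_piece j.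
Proof.
apply/seteqP; split => [z z_lt1|z [j _ [[] //]]].
have [j dot_le] := spread (rho * z).
have rz_le : normc (rho * z) <= 1 + alpha.
  move: z_lt1; rewrite udisc_normcE normcM; case/andP: rho_near1 => _ rho_le z_lt1.
  by have := normc_ge0 z; have := normc_ge0 rho; nra.
have eps_le : eps <= 3 * eps by rewrite ler_peMl ?ltW // ltr1n.
exists j => //; split; first split => //; rewrite /= ball0_normcE;
  by apply: normc_shift_lt_radius; rewrite ?lexx ?eps_le.
Qed.

Lemma closure_phi_cover_piece j : closure (phi eps j @` cover_piece j) `<=` udisc R.
Proof.
rewrite udiscE; apply: subset_trans (closureS _) (@closed_ball_subset_ball _ _ 0 r%:C 1 _).
  by move=> _ [z [[_ ?] _] <-].
by rewrite -[X in _ < X]/((1 : R)%:C) ltcR cover_radius_lt1.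
Qed.

Lemma closure_phi_cover_piece_third j :
  closure (phi eps j @` cdilate 3^-1 (cover_piece j)) `<=` cdilate 3^-1 (udisc R).
Proof.
rewrite cdilate_udisc ?invr_eq0 ?pnatr_eq0 // normfV normr_nat.
apply: subset_trans (closureS _) (@closed_ball_subset_ball _ _ 0 (3^-1 * r%:C) _ _).
  move=> _ [_ [z [_ z_in] <-] <-].
  have -> : rho * (3^-1 * z) + eps%:C * c j = 3^-1 * (rho * z + (3 * eps)%:C * c j).
    by rewrite rmorphM rmorph_nat; field.
  move: z_in; rewrite /ball /= !sub0r !normrN normrM normfV normr_nat.
  by rewrite ltr_pM2l // invr_gt0 ltr0n.
rewrite -[X in _ < X]mulr1 ltr_pM2l ?invr_gt0 ?ltr0n //.
by rewrite -[X in _ < X]/((1 : R)%:C) ltcR cover_radius_lt1.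
Qed.
End Construction.

Lemma sum_ord3 {V : nmodType} (f : 'I_3 -> V) :
  \sum_j f j = f ord0 + f (inord 1) + f (inord 2).
Proof.
rewrite !big_ord_recl big_ord0 addr0 addrA.
by congr (_ + f _ + f _); apply: val_inj; rewrite /= inordK.
Qed.

Lemma small_parameters {R : realFieldType} {d W eta : R} :
  0 < d <= 1 -> 1 <= W -> 0 < eta ->
  exists eps alpha, [/\ 0 < eps < eta, 0 < alpha < eta, 6 * eps * W <= d,
    6 * eps * d <= 1 & 8 * alpha <= eps * d].
Proof.
case/andP=> d_gt0 d_le1 W_ge1 eta_gt0.
pose eps := Num.min (eta / 2) (d / (6 * W)).
have [eps_le_eta eps_le_dW] : eps <= eta / 2 /\ eps <= d / (6 * W).
  by rewrite !ge_min !lexx orbT.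
have eps_gt0 : 0 < eps by rewrite lt_min !divr_gt0 ?mulr_gt0 //; lra.
have eps_W : 6 * eps * W <= d.
  by move: eps_le_dW; rewrite ler_pdivlMr ?mulr_gt0 //; lra.
pose alpha := Num.min (eta / 2) (eps * d / 8).
have [alpha_le_eta alpha_le_ed] : alpha <= eta / 2 /\ alpha <= eps * d / 8.
  by rewrite !ge_min !lexx orbT.
have alpha_gt0 : 0 < alpha by rewrite lt_min !divr_gt0 ?mulr_gt0 //; lra.
exists eps, alpha; split; rewrite ?eps_gt0 ?alpha_gt0 //=; try lra.
by nra.
Qed.

Theorem lemma3p2 (R : realType) (c : 'I_3 -> CC R)
  (hna : ~ aligned (c ord0) (c (inord 1)) (c (inord 2)))
  (hsum : c ord0 + c (inord 1) + c (inord 2) = 0) :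
  forall eta : R, 0 < eta ->
  exists eps0 alpha0 : R,
    [/\ 0 < eps0 < eta, 0 < alpha0 < eta &
    forall rho : CC R,
      (1 - alpha0)%:C <= `|rho| <= (1 + alpha0)%:C ->
      let phi := fun (j : 'I_3) (z : CC R) => rho * z + eps0%:C * c j in
      closure (udisc R) `<=` \bigcup_(j : 'I_3) (phi j @` udisc R) /\
      exists H : 'I_3 -> set (CC R),
        [/\ forall j, open (H j),
            udisc R = \bigcup_(j : 'I_3) H j,
            forall j, closure (phi j @` (H j)) `<=` udisc R &
            forall j, closure (phi j @` (cdilate (3^-1) (H j)))
                        `<=` cdilate (3^-1) (udisc R)]].
Proof.
move=> eta eta_gt0.
have [d0 d0_gt0 spread0] := spread_directions
  (crossc_neq0_of_not_aligned hna hsum) (etrans (sum_ord3 c) hsum).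
pose d := Num.min d0 1.
have d_bd : 0 < d <= 1 by rewrite lt_min d0_gt0 ltr01 ge_min lexx orbT.
have spread v : exists j, dotc v (c j) <= - (d * normc v).
  have [j dot_le] := spread0 v; exists j; apply: le_trans dot_le _.
  by rewrite lerN2 ler_wpM2r ?normc_ge0 // ge_min lexx.
pose W := \big[Num.max/1]_j normc (c j) ^+ 2.
have [eps [alpha [eps_bd alpha_bd eps_W eps_d alpha_le]]] :=
  small_parameters d_bd (bigmax_ge_id _ _ _ _ : 1 <= W) eta_gt0.
exists eps, alpha; split => // rho rho_near1 phi.
case/andP: d_bd eps_bd alpha_bd => d_gt0 _ /andP[eps_gt0 _] /andP[/ltW alpha_ge0 _].
have {}rho_near1 : 1 - alpha <= normc rho <= 1 + alpha.
  by rewrite -!lecR -normr_normc.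
have eps_c j : 6 * eps * normc (c j) ^+ 2 <= d.
  apply: le_trans eps_W; apply: ler_wpM2l; last exact: le_bigmax.
  by rewrite mulr_ge0 ?ltW.
split; first exact: (closed_udisc_covered c d eps alpha rho).
exists (cover_piece c d eps rho); split.
- exact: open_cover_piece.
- exact: (udisc_bigcup_cover_piece c d eps alpha rho).
- exact: closure_phi_cover_piece.
- exact: closure_phi_cover_piece_third.
Qed.
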